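(* Let $f_\bullet\colon X\to Z$ be a non-expansive map between finite metric spaces and $f\colon V\to U$ the induced persistence morphism, $V=\mathrm{PH}_0(X)$, $U=\mathrm{PH}_0(Z)$. Then the block function $\mathcal{M}^0_f$ induces a unique partial matching $\sigma^f\colon\mathrm{Rep}\,\mathcal{B}(V)\nrightarrow\mathrm{Rep}\,\mathcal{B}(U)$; that is, $\sum_{b}\mathcal{M}^0_f(a,b)\le m^V(a)$ for every $a\in S^V$ and $\sum_a\mathcal{M}^0_f(a,b)\le m^U(b)$ for every $b\in S^U$, so that there is a (canonical) partial matching matching exactly $\mathcal{M}^0_f(a,b)$ copies of the bar $[0,a)$ with copies of the bar $[0,b)$ for all $a,b$.
   Context: All vector spaces are over $\mathbb{Z}_2$. A map $f_\bullet\colon X\to Z$ is non-expansive if $d^Z(f_\bullet(x),f_\bullet(y))\le d^X(x,y)$. For a finite metric space $X$ and $r\ge0$, $\mathrm{VR}_r(X)$ is the graph on $X$ with edges $[x,y]$ for $d^X(x,y)\le r$; $\mathrm{PH}_0(X)$ is the persistence module $r\mapsto H_0(\mathrm{VR}_r(X))$ (free on connected components) with structure maps $\rho_{rs}$ induced by inclusion; a non-expansive map induces graph maps $\mathrm{VR}_r(X)\to\mathrm{VR}_r(Z)$ and hence a persistence morphism $f$. The barcode $\mathcal{B}(V)=(S^V,m^V)$ is the multiset of finite death values $b>0$ of the bars $[0,b)$ of $V$ (infinite bar excluded), with multiplicities $m^V(b)$. For a multiset $(S,m)$, $\mathrm{Rep}(S,m)=\{(s,\ell): s\in S,\ 1\le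 \ell\le m(s)\}$. A partial matching $\mathrm{Rep}(S,m)\nrightarrow \mathrm{Rep}(S',m')$ is a bijection between subsets of the two representations. With $\ker^+_b(U)=\ker(\rho^U_{0b})$, $\ker^-_b(U)=\bigcup_{0\le r<b}\ker(\rho^U_{0r})$ and $f_0$ the degree-0 component of $f$, $\mathcal{M}^0_f(a,b)=\dim\frac{f_0(\ker^+_a V)\cap \ker^+_b U}{f_0(\ker^-_a V)\cap\ker^+_b U+f_0(\ker^+_a V)\cap \ker^-_b U}$ for $a,b>0$. *)

(* Degree-0 persistent homology of Vietoris-Rips graphs
   over Z_2 = 'F_2, encoded with mxalgebra row spaces. *)
From HB Require Import structures.
From mathcomp Require Import all_boot all_order all_algebra.
Set Implicit Arguments. Unset Strict Implicit. Unset Printing Implicit Defensive.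
Import Order.TTheory GRing.Theory Num.Theory.
Local Open Scope ring_scope.

Section PH0.
Variable R : realFieldType.

Definition is_metric (X : finType) (d : X -> X -> R) : Prop :=
  [/\ (forall x y, d x y = 0 <-> x = y),
      (forall x y, d x y = d y x) &
      (forall x y z, d x z <= d x y + d y z)].

Definition non_expansive (X Z : finType) (dX : X -> X -> R) (dZ : Z -> Z -> R)
  (f : X -> Z) : Prop := forall x y, dZ (f x) (f y) <= dX x y.

Variable X : finType.
Variable d : X -> X -> R.

(* 0-chains C_0(X) = Z_2^X, as row vectors indexed by enum_rank;
   e x is the vertex x. *)
Definition vtx (x : X) : 'rV['F_2]_#|X| := delta_mx 0 (enum_rank x).

(* boundaries of the edges [x,y] of VR_r(X) (d x y <= r), resp. of the
   edges with d x y < b *)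
Definition bnd_le (r : R) : 'M['F_2]_#|X| :=
  (\sum_(p : X * X | (d p.1 p.2 <= r)%R) <<vtx p.1 - vtx p.2>>)%MS.
Definition bnd_lt (b : R) : 'M['F_2]_#|X| :=
  (\sum_(p : X * X | (d p.1 p.2 < b)%R) <<vtx p.1 - vtx p.2>>)%MS.

(* H_0(VR_r(X)) = C_0 / B_r; the structure map rho_{0r} from
   H_0(VR_0(X)) = C_0 (B_0 = 0 for a metric) is the quotient map, in
   coordinates given by cokermx. *)
Definition rho0 (r : R) : 'M['F_2]_#|X| := cokermx (bnd_le r).

Definition kerP (b : R) : 'M['F_2]_#|X| := kermx (rho0 b).
(* ker^-_b = union_{0 <= r < b} ker rho_{0r} (the kernel of the map to
   the colimit H_0(VR_{<b}(X)) = C_0 / span{edges of length < b}) *)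
Definition kerM (b : R) : 'M['F_2]_#|X| := kermx (cokermx (bnd_lt b)).

(* multiplicity of the bar [0,b) in the barcode of PH_0(X):
   dim ker^+_b - dim ker^-_b (number of components merging at scale b) *)
Definition mult (b : R) : nat := (\rank (kerP b) - \rank (kerM b))%N.

Definition inRep (p : R * nat) : Prop := 0 < p.1 /\ (1 <= p.2 <= mult p.1)%N.

End PH0.

(* f_0 : H_0(VR_0(X)) = C_0(X) -> C_0(Z) = H_0(VR_0(Z)), x |-> f x *)
Definition push (X Z : finType) (f : X -> Z) : 'M['F_2]_(#|X|, #|Z|) :=
  \matrix_(i, j) ((f (enum_val i) == enum_val j)%:R).

(* block function M^0_f(a,b) = dim of the quotient
   (f0(ker^+_a V) ∩ ker^+_b U) / (f0(ker^-_a V) ∩ ker^+_b U + f0(ker^+_a V) ∩ ker^-_b U)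
   (the denominator is a subspace of the numerator) *)
Definition blockM (R : realFieldType) (X Z : finType) (dX : X -> X -> R)
  (dZ : Z -> Z -> R) (f : X -> Z) (a b : R) : nat :=
  let F := push f in
  let Ap := (kerP dX a *m F)%MS in
  let Am := (kerM dX a *m F)%MS in
  let Bp := kerP dZ b in
  let Bm := kerM dZ b in
  (\rank (Ap :&: Bp)%MS - \rank (Am :&: Bp + Ap :&: Bm)%MS)%N.

(* partial matching Rep B(V) -/-> Rep B(U), as a bijection between subsets,
   given by its graph *)
Definition partial_matching (R : realFieldType) (X Z : finType)
  (dX : X -> X -> R) (dZ : Z -> Z -> R)
  (sigma : R * nat -> R * nat -> bool) : Prop :=
  [/\ (forall p q, sigma p q -> inRep dX p /\ inRep dZ q),
      (forall p q q', sigma p q -> sigma p q' -> q = q') &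
      (forall p p' q, sigma p q -> sigma p' q -> p = p')].

Definition nmatched (R : realFieldType) (X Z : finType)
  (dX : X -> X -> R) (dZ : Z -> Z -> R)
  (sigma : R * nat -> R * nat -> bool) (a b : R) : nat :=
  #|[set ij : 'I_(mult dX a) * 'I_(mult dZ b) |
       sigma (a, ij.1.+1) (b, ij.2.+1)]|.

From HB Require Import structures.
From mathcomp Require Import all_boot all_order all_algebra.
From mathcomp Require Import zify.
Set Implicit Arguments. Unset Strict Implicit. Unset Printing Implicit Defensive.
Import Order.TTheory GRing.Theory Num.Theory.
Local Open Scope ring_scope.

(* Fix a and put A^- = f_0(ker^-_a V) <= A^+ = f_0(ker^+_a V).  For nested
   subspaces B^- <= B^+ of C_0(Z), the dimension formula for sums of subspaces
   gives blockdim A^- A^+ B^- B^+ = r(B^+) - r(B^-), r(B) = dim(A^+ :&: B + A^-).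
   Since ker^+_b U <= ker^-_b' U for b < b', the blocks M(a, b) are the lengths
   of disjoint subintervals of [dim A^-, dim A^+], so their sum is at most
   dim A^+ - dim A^-, which is at most m^V(a) because f_0 cannot increase the
   dimension of ker^+_a V / ker^-_a V.  The bound on the sums over a is
   symmetric.  The matching lays the blocks out consecutively: the copies of
   [0, a) are used by the blocks (a, b) in increasing order of b, and the copies
   of [0, b) by the blocks (a, b) in increasing order of a. *)

Lemma leq_sum_disjoint_intervals disp (T : orderType disp) (lo hi : T -> nat)
    (L H : nat) (s : seq T) :
  sorted <%O s -> {in s, forall b, L <= lo b}%N ->
  (forall b, lo b <= hi b <= H)%N ->
  (forall b b', (b < b')%O -> (hi b <= lo b')%N) ->
  (\sum_(b <- s) (hi b - lo b) <= H - L)%N.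
Proof.
move=> + + lo_hi hi_lo; elim: s L => [|b s IHs] L /= s_sorted L_lo.
  by rewrite big_nil.
rewrite big_cons.
have /andP[lo_b b_H] := lo_hi b.
have L_b := L_lo b (mem_head _ _).
have b_min := order_path_min lt_trans s_sorted.
have hi_lo_s : {in s, forall b', hi b <= lo b'}%N.
  by move=> b' /(allP b_min)/hi_lo.
have := IHs (hi b) (path_sorted s_sorted) hi_lo_s.
lia.
Qed.

Lemma leq_sum_subpred_add (I : eqType) (s : seq I) (F : I -> nat) (P Q : pred I) j :
  uniq s -> j \in s -> subpred P Q -> ~~ P j -> Q j ->
  (\sum_(i <- s | P i) F i + F j <= \sum_(i <- s | Q i) F i)%N.
Proof.
move=> s_uniq j_s PQ Pj Qj.
rewrite -[X in (_ <= X)%N]big_filter (bigD1_seq j) ?mem_filter ?Qj ?filter_uniq //.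
rewrite big_filter_cond addnC leq_add2l.
apply: (sub_le_big leqnn (fun x y => leq_addr y x)) => i Pi.
by rewrite PQ //; apply: contraNneq Pj => <-.
Qed.

Section RowSpaces.
Variable K : fieldType.

Lemma sumsmx_subpred (I : finType) (P Q : pred I) n (A : I -> 'M[K]_n) :
  subpred P Q -> (\sum_(i | P i) A i <= \sum_(i | Q i) A i)%MS.
Proof. by move=> PQ; apply/sumsmx_subP => i /PQ Qi; apply: (sumsmx_sup i). Qed.

Lemma kermx_cokermx m n (A : 'M[K]_(m, n)) : (kermx (cokermx A) :=: A)%MS.
Proof.
by apply/eqmxP; rewrite submxE -sub_kermx submx_refl sub_kermx mulmx_coker eqxx.
Qed.

Lemma leq_mxrank_mulmx_subn m1 m2 n p (A : 'M[K]_(m1, n)) (B : 'M[K]_(m2, n))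
    (F : 'M[K]_(n, p)) :
  (B <= A)%MS -> (\rank (A *m F) - \rank (B *m F) <= \rank A - \rank B)%N.
Proof.
move=> sBA; have := mxrank_mul_ker A F; have := mxrank_mul_ker B F.
have : (\rank (B :&: kermx F) <= \rank (A :&: kermx F))%N.
  by rewrite mxrankS ?capmxS.
lia.
Qed.

Definition blockdim m1 m2 n (Am Ap : 'M[K]_(m1, n)) (Bm Bp : 'M[K]_(m2, n)) : nat :=
  (\rank (Ap :&: Bp) - \rank (Am :&: Bp + Ap :&: Bm))%MS%N.

Lemma blockdimC m1 m2 n (Am Ap : 'M[K]_(m1, n)) (Bm Bp : 'M[K]_(m2, n)) :
  blockdim Am Ap Bm Bp = blockdim Bm Bp Am Ap.
Proof. by rewrite /blockdim addsmxC !(capmxC Ap) !(capmxC Am). Qed.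

Lemma blockdim_eq0r m1 m2 n (Am Ap : 'M[K]_(m1, n)) (B : 'M[K]_(m2, n)) :
  blockdim Am Ap B B = 0%N.
Proof. by apply/eqP; rewrite subn_eq0 mxrankS ?addsmxSr. Qed.

Lemma mxrank_cap_addsmx m1 m2 n (Am Ap : 'M[K]_(m1, n)) (B : 'M[K]_(m2, n)) :
  (Am <= Ap)%MS ->
  (\rank (Ap :&: B + Am) + \rank (Am :&: B) = \rank (Ap :&: B) + \rank Am)%N.
Proof.
move=> sAmAp; rewrite -[RHS]mxrank_sum_cap (capmxC (Ap :&: B)%MS) capmxA.
by rewrite (cap_eqmx (capmx_idPl sAmAp) (eqmx_refl B)).
Qed.

Lemma blockdimE m1 m2 n (Am Ap : 'M[K]_(m1, n)) (Bm Bp : 'M[K]_(m2, n)) :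
  (Am <= Ap)%MS -> (Bm <= Bp)%MS ->
  blockdim Am Ap Bm Bp = (\rank (Ap :&: Bp + Am) - \rank (Ap :&: Bm + Am))%MS%N.
Proof.
move=> sAmAp sBmBp; rewrite /blockdim.
have := mxrank_cap_addsmx Bp sAmAp; have := mxrank_cap_addsmx Bm sAmAp.
have := mxrank_sum_cap (Am :&: Bp)%MS (Ap :&: Bm)%MS.
have -> : \rank ((Am :&: Bp) :&: (Ap :&: Bm))%MS = \rank (Am :&: Bm)%MS.
  apply/eqmx_rank/andP; split; first by rewrite capmxS ?capmxSr ?capmxSl.
  by rewrite !sub_capmx capmxSl capmxSr (submx_trans (capmxSl _ _) sAmAp)
             (submx_trans (capmxSr _ _) sBmBp).
lia.
Qed.

Section Filtration.
Variables (disp : Order.disp_t) (T : orderType disp).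

(* [Bm b] and [Bp b] play the parts of B_{<b} and B_{<=b} of an increasing
   filtration indexed by [T]. *)
Definition filtration_pair m n (Bm Bp : T -> 'M[K]_(m, n)) : Prop :=
  (forall b, Bm b <= Bp b)%MS /\ (forall b b', (b < b')%O -> (Bp b <= Bm b')%MS).

Lemma filtration_pair_mulmx m n p (Bm Bp : T -> 'M[K]_(m, n)) (F : 'M[K]_(n, p)) :
  filtration_pair Bm Bp ->
  filtration_pair (fun b => Bm b *m F) (fun b => Bp b *m F).
Proof.
by case=> sBmBp sBpBm; split=> [b|b b' /sBpBm/submxMr //]; exact/submxMr/sBmBp.
Qed.

Lemma leq_sum_blockdimr m1 m2 n (Am Ap : 'M[K]_(m1, n)) (Bm Bp : T -> 'M[K]_(m2, n))
    (s : seq T) :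
  (Am <= Ap)%MS -> filtration_pair Bm Bp -> uniq s ->
  (\sum_(b <- s) blockdim Am Ap (Bm b) (Bp b) <= \rank Ap - \rank Am)%N.
Proof.
move=> sAmAp [sBmBp sBpBm] s_uniq.
rewrite -(perm_big _ (permEl (perm_sort <=%O s))).
under eq_bigr => b _ do rewrite blockdimE //.
apply: leq_sum_disjoint_intervals; first by rewrite sort_lt_sorted.
- by move=> b _; rewrite mxrankS ?addsmxSr.
- by move=> b; rewrite !mxrankS ?addsmxS ?capmxS ?addsmx_sub ?capmxSl.
- by move=> b b' /sBpBm ?; rewrite mxrankS ?addsmxS ?capmxS.
Qed.

Lemma leq_sum_blockdiml m1 m2 n (Am Ap : T -> 'M[K]_(m1, n)) (Bm Bp : 'M[K]_(m2, n))
    (s : seq T) :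
  (Bm <= Bp)%MS -> filtration_pair Am Ap -> uniq s ->
  (\sum_(a <- s) blockdim (Am a) (Ap a) Bm Bp <= \rank Bp - \rank Bm)%N.
Proof.
by move=> *; under eq_bigr => a _ do rewrite blockdimC; apply: leq_sum_blockdimr.
Qed.

End Filtration.

End RowSpaces.

Section Offsets.
Variables (disp : Order.disp_t) (T : orderType disp).
Implicit Types (s : seq T) (g : T -> nat).

Definition offset s g (b : T) : nat := (\sum_(x <- s | (x < b)%O) g x)%N.

Lemma offset_add_leq_sum s g b :
  uniq s -> b \in s -> (offset s g b + g b <= \sum_(x <- s) g x)%N.
Proof. by move=> s_uniq b_s; apply: leq_sum_subpred_add; rewrite ?ltxx. Qed.

Lemma offset_add_leq_offset s g b b' :
  uniq s -> b \in s -> (b < b')%O -> (offset s g b + g b <= offset s g b')%N.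
Proof.
move=> s_uniq b_s lt_bb'; apply: leq_sum_subpred_add; rewrite ?ltxx //.
by move=> x /lt_trans; apply.
Qed.

End Offsets.

Lemma sum_ord_interval (m lo hi : nat) : (lo <= hi)%N ->
  (\sum_(i < m) (lo <= i < hi)%N = minn hi m - minn lo m)%N.
Proof.
move=> le_lo_hi; elim: m => [|m IHm]; first by rewrite big_ord0 !minn0.
by rewrite big_ord_recr /= IHm; case: (leqP lo m); case: (ltnP m hi); lia.
Qed.

Lemma card_set_pairs (I J : finType) (P : I -> J -> bool) :
  #|[set ij : I * J | P ij.1 ij.2]| = (\sum_(i : I) \sum_(j : J) P i j)%N.
Proof.
rewrite -sum1_card big_mkcond /= pair_big /=.
by apply: eq_bigr => -[i j] _; rewrite inE /=; case: (P i j).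
Qed.

Lemma sum_ord_pred1 (m x : nat) : (\sum_(j < m) (j == x :> nat) = (x < m))%N.
Proof.
have := big_ord1_eq addn (fun=> 1%N) x m; rewrite big_mkcond /= => ->.
by case: (x < m)%N.
Qed.

Section PH0Filtration.
Variables (R : realFieldType) (X : finType) (d : X -> X -> R).

Lemma kerM_kerP_filtration : filtration_pair (kerM d) (kerP d).
Proof.
rewrite /kerM /kerP /rho0; split=> [b|b b' lt_bb']; rewrite !kermx_cokermx.
  by apply: sumsmx_subpred => p; apply: ltW.
by apply: sumsmx_subpred => p /le_lt_trans; apply.
Qed.

Definition dists : seq R := undup [seq d p.1 p.2 | p : X * X].

Lemma kerP_kerM_notin_dists b : b \notin dists -> kerP d b = kerM d b.
Proof.
move=> b_dists; rewrite /kerP /kerM /rho0; congr (kermx (cokermx _)).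
apply: eq_bigl => p; rewrite le_eqVlt; case: eqP => // dp_b.
case/negP: b_dists; rewrite mem_undup -dp_b.
by apply: (map_f (fun p => d p.1 p.2)); rewrite mem_enum.
Qed.

End PH0Filtration.

Section BlockMatching.
Variables (R : realFieldType) (X Z : finType).
Variables (dX : X -> X -> R) (dZ : Z -> Z -> R) (f : X -> Z).

Local Notation blk := (blockM dX dZ f).

Lemma blockME a b :
  blk a b = blockdim (kerM dX a *m push f) (kerP dX a *m push f)
                     (kerM dZ b) (kerP dZ b).
Proof. by []. Qed.

Lemma leq_sum_blockMr a s : uniq s -> (\sum_(b <- s) blk a b <= mult dX a)%N.
Proof.
move=> s_uniq; apply: leq_trans (leq_mxrank_mulmx_subn (push f) _); last first.
  by case: (kerM_kerP_filtration dX).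
apply: leq_sum_blockdimr s_uniq; last exact: kerM_kerP_filtration.
by apply: submxMr; case: (kerM_kerP_filtration dX).
Qed.

Lemma leq_sum_blockMl b s : uniq s -> (\sum_(a <- s) blk a b <= mult dZ b)%N.
Proof.
move=> s_uniq; apply: leq_sum_blockdiml s_uniq.
  by case: (kerM_kerP_filtration dZ).
exact/filtration_pair_mulmx/kerM_kerP_filtration.
Qed.

Lemma blockM_gt0_dists a b : (0 < blk a b)%N -> a \in dists dX /\ b \in dists dZ.
Proof.
move=> blk_gt0; split; apply: contraTT blk_gt0; rewrite -leqNgt leqn0 blockME.
  by move=> /kerP_kerM_notin_dists->; rewrite blockdimC blockdim_eq0r.
by move=> /kerP_kerM_notin_dists->; rewrite blockdim_eq0r.
Qed.

Definition offsetV a b := offset (dists dZ) (blk a) b.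
Definition offsetU a b := offset (dists dX) (blk^~ b) a.

Lemma offsetV_add_leq_mult a b :
  (0 < blk a b)%N -> (offsetV a b + blk a b <= mult dX a)%N.
Proof.
case/blockM_gt0_dists => _ b_dists.
apply: leq_trans (offset_add_leq_sum _ (undup_uniq _) b_dists) _.
exact: leq_sum_blockMr (undup_uniq _).
Qed.

Lemma offsetU_add_leq_mult a b :
  (0 < blk a b)%N -> (offsetU a b + blk a b <= mult dZ b)%N.
Proof.
case/blockM_gt0_dists => a_dists _.
apply: leq_trans (offset_add_leq_sum _ (undup_uniq _) a_dists) _.
exact: leq_sum_blockMl (undup_uniq _).
Qed.

Lemma offsetV_add_leq_offsetV a b b' :
  (0 < blk a b)%N -> b < b' -> (offsetV a b + blk a b <= offsetV a b')%N.
Proof.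
by case/blockM_gt0_dists => _; apply: offset_add_leq_offset; apply: undup_uniq.
Qed.

Lemma offsetU_add_leq_offsetU a a' b :
  (0 < blk a b)%N -> a < a' -> (offsetU a b + blk a b <= offsetU a' b)%N.
Proof.
by case/blockM_gt0_dists => + _; apply: offset_add_leq_offset; apply: undup_uniq.
Qed.

(* Copies are numbered from 1: the block (a, b) matches the copies
   offsetV a b + 1, ..., offsetV a b + M(a, b) of [0, a), in order, with the
   copies of [0, b) numbered from offsetU a b + 1 on. *)
Definition block_matching (p q : R * nat) : bool :=
  let: (a, i) := p in let: (b, j) := q in
  [&& 0 < a, 0 < b, (offsetV a b < i <= offsetV a b + blk a b)%N
    & j == (i - offsetV a b + offsetU a b)%N].

Lemma block_matching_inRep p q : block_matching p q -> inRep dX p /\ inRep dZ q.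
Proof.
case: p q => [a i] [b j] /and4P[a_gt0 b_gt0 /andP[lt_i le_i] /eqP->].
have blk_gt0 : (0 < blk a b)%N by lia.
have := offsetV_add_leq_mult blk_gt0; have := offsetU_add_leq_mult blk_gt0.
move=> le_offsetU le_offsetV; split; split=> //=; apply/andP; split; lia.
Qed.

Lemma block_matching_functional p q q' :
  block_matching p q -> block_matching p q' -> q = q'.
Proof.
case: p q q' => [a i] [b j] [b' j'] /and4P[_ _ /andP[lt_i le_i] /eqP->].
move=> /and4P[_ _ /andP[lt_i' le_i'] /eqP->].
case: (ltgtP b b') => [lt_bb'|lt_b'b|<-]; last by [].
  by have := @offsetV_add_leq_offsetV a b b' _ lt_bb'; lia.
by have := @offsetV_add_leq_offsetV a b' b _ lt_b'b; lia.
Qed.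

Lemma block_matching_injective p p' q :
  block_matching p q -> block_matching p' q -> p = p'.
Proof.
case: p p' q => [a i] [a' i'] [b j] /and4P[_ _ /andP[lt_i le_i] /eqP->].
move=> /and4P[_ _ /andP[lt_i' le_i'] /eqP eq_j].
case: (ltgtP a a') => [lt_aa'|lt_a'a|eq_aa']; last by subst a'; congr (_, _); lia.
  by have := @offsetU_add_leq_offsetU a a' b _ lt_aa'; lia.
by have := @offsetU_add_leq_offsetU a' a b _ lt_a'a; lia.
Qed.

Lemma block_matching_partial : partial_matching dX dZ block_matching.
Proof.
split; [exact: block_matching_inRep | exact: block_matching_functional |
        exact: block_matching_injective].
Qed.

Lemma sum_block_matching_row a b i : 0 < a -> 0 < b ->
  (\sum_(j < mult dZ b) block_matching (a, i.+1) (b, j.+1)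
   = (offsetV a b <= i < offsetV a b + blk a b))%N.
Proof.
move=> a_gt0 b_gt0; rewrite /block_matching a_gt0 b_gt0 ltnS /=.
have := @offsetU_add_leq_mult a b.
set oA := offsetV a b; set oB := offsetU a b; set k := blk a b => le_oBk.
case i_blk: (oA <= i < oA + k)%N; last by rewrite big1.
have /andP[le_oA_i lt_i] := i_blk.
rewrite subSn // addSn; under eq_bigr => j _ do rewrite eqSS.
by rewrite sum_ord_pred1 (_ : i - oA + oB < mult dZ b)%N //; lia.
Qed.

Lemma nmatched_block_matching a b :
  0 < a -> 0 < b -> nmatched dX dZ block_matching a b = blk a b.
Proof.
move=> a_gt0 b_gt0; rewrite /nmatched.
rewrite (card_set_pairs (fun (i : 'I_(mult dX a)) (j : 'I_(mult dZ b)) =>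
  block_matching (a, i.+1) (b, j.+1))).
under eq_bigr => i _ do rewrite sum_block_matching_row //.
rewrite sum_ord_interval ?leq_addr //.
have [->|blk_gt0] := posnP (blk a b); first by rewrite addn0 subnn.
by have := offsetV_add_leq_mult blk_gt0; lia.
Qed.

End BlockMatching.

Theorem lemma4p2 (R : realFieldType) (X Z : finType)
  (dX : X -> X -> R) (dZ : Z -> Z -> R) (f : X -> Z) :
  is_metric dX -> is_metric dZ -> non_expansive dX dZ f ->
  (forall a, 0 < a -> (0 < mult dX a)%N ->
     forall s : seq R, uniq s -> all (fun b => 0 < b) s ->
     (\sum_(b <- s) blockM dX dZ f a b <= mult dX a)%N) /\
  (forall b, 0 < b -> (0 < mult dZ b)%N ->
     forall s : seq R, uniq s -> all (fun a => 0 < a) s ->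
     (\sum_(a <- s) blockM dX dZ f a b <= mult dZ b)%N) /\
  (exists sigma : R * nat -> R * nat -> bool,
     partial_matching dX dZ sigma /\
     forall a b, 0 < a -> 0 < b -> nmatched dX dZ sigma a b = blockM dX dZ f a b).
Proof.
move=> _ _ _; split; [|split].
- by move=> a _ _ s s_uniq _; apply: leq_sum_blockMr.
- by move=> b _ _ s s_uniq _; apply: leq_sum_blockMl.
- exists (block_matching dX dZ f); split; first exact: block_matching_partial.
  exact: nmatched_block_matching.
Qed.
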